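(* Let $n\ge4$ and let $x\in B$ with $|x|=2n+4$ and $\delta(x)=4$. Then $[x]_2\notin R$.
   Context: Stern's sequence $(a(n))_{n\ge0}$: $a(0)=0$, $a(1)=1$, $a(2n)=a(n)$, $a(2n+1)=a(n)+a(n+1)$; $s(n)=a(n+1)$. $R$ is the set of record-setters of $s$, i.e. indices $v\ge0$ with $s(i)<s(v)$ for all $i<v$. For a binary string $x$, $[x]_2$ is the integer it represents in base 2 and $|x|$ its length. $B$ denotes the set of nonempty binary strings that are concatenations of blocks each equal to $10$ or $100$; for $x\in B$, $\delta(x)$ is the number of $0$s minus the number of $1$s in $x$, which equals the number of $100$ blocks. *)

From mathcomp Require Import all_boot.
From mathcomp Require Import ssralg ssrint.
Set Implicit Arguments. Unset Strict Implicit. Unset Printing Implicit Defensive.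

(* Stern's diatomic sequence a(n), computed with fuel (fuel n suffices). *)
Fixpoint stern_fuel (fuel n : nat) : nat :=
  match fuel with
  | 0 => 0
  | f.+1 =>
    if n is 0 then 0 else if n == 1 then 1 else
    if ~~ odd n then stern_fuel f n./2
    else stern_fuel f n./2 + stern_fuel f (n./2).+1
  end.

Definition stern_a (n : nat) : nat := stern_fuel n.+1 n.

Definition stern_s (n : nat) : nat := stern_a n.+1.

Definition record_setter (v : nat) : Prop := forall i, i < v -> stern_s i < stern_s v.

(* binary strings: seq bool, most significant bit first, true = 1 *)
Definition bin_val (x : seq bool) : nat := foldl (fun acc (b : bool) => acc.*2 + nat_of_bool b) 0 x.

Definition inB (x : seq bool) : Prop :=
  exists blocks : seq (seq bool),
    blocks != [::] /\
    all (fun b => (b == [:: true; false]) || (b == [:: true; false; false])) blocks /\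
    x = flatten blocks.

Definition delta (x : seq bool) : int :=
  (Posz (count negb x) - Posz (count id x))%R.

From mathcomp Require Import all_boot.
From mathcomp Require Import ssralg ssrint.
From mathcomp Require Import zify ring.

(* An element of B with four 100 blocks reads (10)^a0 100 (10)^a1 100 (10)^a2 100 (10)^a3 100 (10)^a4.
   According as a0 > 0, a0 = 0 < a1 or a0 = a1 = 0, the word
     100 (10)^(a0-1+a1+a2+a3+a4+4) 100,   100 100 (10)^(a1-1+a2+a3+a4+4),   1000 (10)^(a2+a3+a4+4)
   has the same length, is smaller in binary (it has a 0 where x first has a 1), and s is at least as
   large on it, so [x]_2 is not a record-setter.
   To compare values of s: reading the bits left to right, (a(v), a(v+1)) is the bottom row of the
   product of [[1,0],[1,1]] (bit 1) and [[1,1],[0,1]] (bit 0), so s([x]_2) is the (2,2) entry of that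
   product. The block 10 gives A = [[1,1],[1,2]], and every power of A is a nonnegative integer
   combination of I, A and A^2 - A. Both sides of each comparison are additive in each power A^ai, so
   it suffices to compare them when every A^ai is replaced by I, A or A^2 - A, which is a finite
   numerical check. *)

Lemma stern_fuel_enough f g n : n < f -> n < g -> stern_fuel f n = stern_fuel g n.
Proof.
elim: f g n => [|f IH] [|g] [|[|n]] //= ltnf ltng.
have := odd_double_half n; case: (odd n) => /= halfE.
- by rewrite (IH g n./2.+1) ?(IH g n./2.+2) //; lia.
- by rewrite (IH g n./2.+1) //; lia.
Qed.

Lemma stern_fuelS f n : 1 < n -> stern_fuel f.+1 n =
  if ~~ odd n then stern_fuel f n./2 else stern_fuel f n./2 + stern_fuel f n./2.+1.
Proof. by case: n => [|[|n]]. Qed.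

Lemma stern_a_double m : stern_a m.*2 = stern_a m.
Proof.
case: m => [|m] //; rewrite /stern_a stern_fuelS; last lia.
by rewrite odd_double doubleK; apply: stern_fuel_enough; lia.
Qed.

Lemma stern_a_doubleS m : stern_a m.*2.+1 = stern_a m + stern_a m.+1.
Proof.
case: m => [|m] //; rewrite /stern_a stern_fuelS; last lia.
rewrite [odd _]/= odd_double [_./2]/= uphalf_double.
by rewrite (@stern_fuel_enough _ m.+2 m.+1) ?(@stern_fuel_enough _ m.+3 m.+2) //; lia.
Qed.

Lemma bin_val_cat x y : bin_val (x ++ y) = bin_val x * 2 ^ size y + bin_val y.
Proof.
rewrite /bin_val foldl_cat; move: (foldl _ 0 x) => acc.
elim: y acc => [|b y IH] acc /=; first lia.
by rewrite IH [in RHS]IH expnS; lia.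
Qed.

Lemma bin_val_rcons x b : bin_val (rcons x b) = (bin_val x).*2 + b.
Proof. by rewrite /bin_val foldl_rcons. Qed.

Lemma bin_val_cons b y : bin_val (b :: y) = b * 2 ^ size y + bin_val y.
Proof. by rewrite -cat1s bin_val_cat; case: b. Qed.

Lemma bin_val_lt x : bin_val x < 2 ^ size x.
Proof.
elim/last_ind: x => [|x b IH] //.
by rewrite bin_val_rcons size_rcons expnS; case: b => /=; lia.
Qed.

Lemma bin_val_lex u {p q} : size p = size q ->
  bin_val (u ++ false :: p) < bin_val (u ++ true :: q).
Proof.
move=> size_pq; rewrite !bin_val_cat !bin_val_cons /= size_pq.
by have := bin_val_lt p; rewrite size_pq; lia.
Qed.

Record mx2 := Mx2 { m11 : nat; m12 : nat; m21 : nat; m22 : nat }.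

Definition mmul (X Y : mx2) : mx2 :=
  Mx2 (m11 X * m11 Y + m12 X * m21 Y) (m11 X * m12 Y + m12 X * m22 Y)
      (m21 X * m11 Y + m22 X * m21 Y) (m21 X * m12 Y + m22 X * m22 Y).

Definition madd (X Y : mx2) : mx2 :=
  Mx2 (m11 X + m11 Y) (m12 X + m12 Y) (m21 X + m21 Y) (m22 X + m22 Y).

Definition mx0 : mx2 := Mx2 0 0 0 0.
Definition mx1 : mx2 := Mx2 1 0 0 1.

Ltac mx2_ring := rewrite /mmul /madd /=; congr Mx2; ring.

Lemma mmulA X Y Z : mmul X (mmul Y Z) = mmul (mmul X Y) Z. Proof. mx2_ring. Qed.
Lemma mmul1m X : mmul mx1 X = X. Proof. case: X => ????; mx2_ring. Qed.
Lemma mmulm1 X : mmul X mx1 = X. Proof. case: X => ????; mx2_ring. Qed.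
Lemma mmulm0 X : mmul X mx0 = mx0. Proof. mx2_ring. Qed.
Lemma mmulDl X Y Z : mmul (madd X Y) Z = madd (mmul X Z) (mmul Y Z). Proof. mx2_ring. Qed.
Lemma mmulDr X Y Z : mmul Z (madd X Y) = madd (mmul Z X) (mmul Z Y). Proof. mx2_ring. Qed.
Lemma maddA X Y Z : madd X (madd Y Z) = madd (madd X Y) Z. Proof. mx2_ring. Qed.
Lemma madd0m X : madd mx0 X = X. Proof. case: X => ????; mx2_ring. Qed.

Definition bit_mx (b : bool) : mx2 := if b then Mx2 1 0 1 1 else Mx2 1 1 0 1.

Definition word_mx (x : seq bool) : mx2 := foldr (fun b M => mmul (bit_mx b) M) mx1 x.

Lemma word_mx_cat x y : word_mx (x ++ y) = mmul (word_mx x) (word_mx y).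
Proof. by elim: x => [|b x IH] /=; rewrite ?mmul1m // IH mmulA. Qed.

Lemma word_mx_rcons x b : word_mx (rcons x b) = mmul (word_mx x) (bit_mx b).
Proof. by rewrite -cats1 word_mx_cat /= mmulm1. Qed.

Lemma stern_word_mx x :
  stern_a (bin_val x) = m21 (word_mx x) /\ stern_a (bin_val x).+1 = m22 (word_mx x).
Proof.
elim/last_ind: x => [|x b [IHa IHa1]] //.
rewrite bin_val_rcons word_mx_rcons; case: b => /=.
- rewrite addn1 -doubleS stern_a_doubleS stern_a_double IHa IHa1; split; ring.
- rewrite addn0 stern_a_double stern_a_doubleS IHa IHa1; split; ring.
Qed.

Lemma stern_s_word_mx x : stern_s (bin_val x) = m22 (word_mx x).
Proof. exact: (stern_word_mx x).2. Qed.

Definition w10 : seq bool := [:: true; false].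
Definition w100 : seq bool := [:: true; false; false].
Definition w1000 : seq bool := [:: true; false; false; false].
Definition rep10 (a : nat) : seq bool := flatten (nseq a w10).

Lemma rep10S a : rep10 a.+1 = w10 ++ rep10 a.
Proof. by []. Qed.

Lemma size_rep10 a : size (rep10 a) = a.*2.
Proof. by elim: a => //= a IH; rewrite IH. Qed.

Definition mxA : mx2 := Mx2 1 1 1 2.
(* mxA ^ 2 - mxA *)
Definition mxB : mx2 := Mx2 1 2 2 3.

Inductive in_cone : mx2 -> Prop :=
  | in_cone0 : in_cone mx0
  | in_coneD1 P : in_cone P -> in_cone (madd P mx1)
  | in_coneDA P : in_cone P -> in_cone (madd P mxA)
  | in_coneDB P : in_cone P -> in_cone (madd P mxB).

Lemma in_coneD P Q : in_cone P -> in_cone Q -> in_cone (madd P Q).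
Proof.
move=> coneP; elim=> [|R _ IH|R _ IH|R _ IH]; rewrite ?maddA; try by constructor.
by case: P coneP => ? ? ? ?; rewrite /madd /= !addn0.
Qed.

Lemma in_cone_mulA P : in_cone P -> in_cone (mmul mxA P).
Proof.
have coneA : in_cone mxA by rewrite -[mxA]madd0m; do !constructor.
have coneB : in_cone mxB by rewrite -[mxB]madd0m; do !constructor.
elim=> [|Q _ IH|Q _ IH|Q _ IH]; first by rewrite mmulm0; constructor.
all: rewrite mmulDr; apply: in_coneD => //.
- by rewrite [mmul _ _]/(madd mxA mxB); apply: in_coneD.
- by rewrite [mmul _ _]/(madd mxA (madd mxB mxB)); do !apply: in_coneD.
Qed.

Lemma in_cone_rep10 a : in_cone (word_mx (rep10 a)).
Proof.
elim: a => [|a IH]; first by rewrite -[word_mx _]madd0m; do !constructor.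
by rewrite rep10S word_mx_cat; apply: in_cone_mulA.
Qed.

Lemma madd_morph_id : {morph (fun P : mx2 => P) : P Q / madd P Q}.
Proof. by []. Qed.

Lemma madd_morph_mmull L f :
  {morph f : P Q / madd P Q} -> {morph (fun P => mmul L (f P)) : P Q / madd P Q}.
Proof. by move=> fD P Q; rewrite fD mmulDr. Qed.

Lemma madd_morph_mmulr R f :
  {morph f : P Q / madd P Q} -> {morph (fun P => mmul (f P) R) : P Q / madd P Q}.
Proof. by move=> fD P Q; rewrite fD mmulDl. Qed.

Lemma in_cone_m22_le (f g : mx2 -> mx2) :
  {morph f : P Q / madd P Q} -> {morph g : P Q / madd P Q} ->
  m22 (f mx1) <= m22 (g mx1) -> m22 (f mxA) <= m22 (g mxA) -> m22 (f mxB) <= m22 (g mxB) ->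
  forall P, in_cone P -> m22 (f P) <= m22 (g P).
Proof.
move=> fD gD le1 leA leB P; elim=> [|Q _ IH|Q _ IH|Q _ IH]; rewrite ?fD ?gD /=;
  try exact: leq_add.
have := congr1 m22 (fD mx0 mx0); rewrite (_ : madd mx0 mx0 = mx0) //=; lia.
Qed.

Ltac madd_morph :=
  repeat first [apply madd_morph_mmull | apply madd_morph_mmulr | apply madd_morph_id].

(* Eliminates the in_cone variables one at a time with in_cone_m22_le, leaving the
   3^k closed inequalities where each variable is mx1, mxA or mxB. *)
Ltac cone_le :=
  match goal with
  | H : in_cone ?P |- _ =>
      move: P H; apply: in_cone_m22_le; [madd_morph | madd_morph | cbv beta; cone_le ..]
  | |- _ => by vm_compute
  end.

Definition mxC : mx2 := Mx2 1 2 1 3.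
Definition mxD : mx2 := Mx2 1 3 1 4.
Definition mxA4 : mx2 := Mx2 13 21 21 34.

Lemma word_mx_rep10_4 : word_mx (rep10 4) = mxA4.
Proof. by []. Qed.

Lemma m22_case1_le P0 P1 P2 P3 P4 :
  in_cone P0 -> in_cone P1 -> in_cone P2 -> in_cone P3 -> in_cone P4 ->
  m22 (mmul mxA (mmul P0 (mmul mxC (mmul P1 (mmul mxC (mmul P2 (mmul mxC
    (mmul P3 (mmul mxC P4))))))))) <=
  m22 (mmul mxC (mmul P0 (mmul P1 (mmul P2 (mmul P3 (mmul P4 (mmul mxA4 mxC))))))).
Proof. by move=> *; cone_le. Qed.

Lemma m22_case2_le P1 P2 P3 P4 :
  in_cone P1 -> in_cone P2 -> in_cone P3 -> in_cone P4 ->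
  m22 (mmul mxC (mmul mxA (mmul P1 (mmul mxC (mmul P2 (mmul mxC
    (mmul P3 (mmul mxC P4)))))))) <=
  m22 (mmul mxC (mmul mxC (mmul P1 (mmul P2 (mmul P3 (mmul P4 mxA4)))))).
Proof. by move=> *; cone_le. Qed.

Lemma m22_case3_le P2 P3 P4 :
  in_cone P2 -> in_cone P3 -> in_cone P4 ->
  m22 (mmul mxC (mmul mxC (mmul P2 (mmul mxC (mmul P3 (mmul mxC P4)))))) <=
  m22 (mmul mxD (mmul P2 (mmul P3 (mmul P4 mxA4)))).
Proof. by move=> *; cone_le. Qed.

Lemma not_record_setter_witness u x w :
  (exists q, x = u ++ true :: q) -> (exists p, w = u ++ false :: p) ->
  size w = size x -> m22 (word_mx x) <= m22 (word_mx w) -> ~ record_setter (bin_val x).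
Proof.
move=> [q ->] [p ->]; rewrite !size_cat /= => /addnI [size_pq] le_s rs.
by have := rs _ (bin_val_lex u size_pq); rewrite !stern_s_word_mx; lia.
Qed.

Lemma rep10_w100_cons a s : rep10 a ++ w100 ++ s = true :: behead (rep10 a ++ w100 ++ s).
Proof. by case: a. Qed.

Lemma not_record_setter_four_w100 a0 a1 a2 a3 a4 :
  ~ record_setter (bin_val (rep10 a0 ++ w100 ++ rep10 a1 ++ w100 ++ rep10 a2 ++ w100 ++
                            rep10 a3 ++ w100 ++ rep10 a4)).
Proof.
(* Generalizing rep10 4 keeps word_mx_cat from splitting it into blocks. *)
move: (rep10 4) (size_rep10 4) word_mx_rep10_4 => r4 size_r4 r4E.
case: a0 => [|a0]; [case: a1 => [|a1] |].
- rewrite !cat0s.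
  apply: (@not_record_setter_witness w100 _ (w1000 ++ rep10 a2 ++ rep10 a3 ++ rep10 a4 ++ r4)).
  + by eexists.
  + by eexists.
  + by rewrite !size_cat !size_rep10 size_r4 /=; lia.
  + rewrite !word_mx_cat r4E; apply: m22_case3_le; exact: in_cone_rep10.
- rewrite cat0s rep10S -catA.
  apply: (@not_record_setter_witness (w100 ++ w10) _
    (w100 ++ w100 ++ rep10 a1 ++ rep10 a2 ++ rep10 a3 ++ rep10 a4 ++ r4)).
  + by rewrite rep10_w100_cons; eexists.
  + by eexists.
  + by rewrite !size_cat !size_rep10 size_r4 /=; lia.
  + rewrite !word_mx_cat r4E; apply: m22_case2_le; exact: in_cone_rep10.
- rewrite rep10S -catA.
  apply: (@not_record_setter_witness w10 _
    (w100 ++ rep10 a0 ++ rep10 a1 ++ rep10 a2 ++ rep10 a3 ++ rep10 a4 ++ r4 ++ w100)).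
  + by rewrite rep10_w100_cons; eexists.
  + by eexists.
  + by rewrite !size_cat !size_rep10 size_r4 /=; lia.
  + rewrite !word_mx_cat r4E; apply: m22_case1_le; exact: in_cone_rep10.
Qed.

Definition block (b : seq bool) : bool := (b == w10) || (b == w100).

Lemma delta_flatten_blocks bs : all block bs -> delta (flatten bs) = count (pred1 w100) bs.
Proof.
have counts : all block bs -> count negb (flatten bs) = size bs + count (pred1 w100) bs /\
                             count id (flatten bs) = size bs.
  elim: bs => [|b bs IH] //= /andP [/orP [] /eqP -> /IH [IHneg IHid]];
    by rewrite !count_cat IHneg IHid /=; split; lia.
by rewrite /delta => /counts [-> ->]; lia.
Qed.

Lemma flatten_blocks {bs} : all block bs -> exists s a, size s = count (pred1 w100) bs /\
  flatten bs = foldr (fun a0 t => rep10 a0 ++ w100 ++ t) (rep10 a) s.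
Proof.
elim: bs => [|b bs IH] /=; first by exists [::], 0.
case/andP=> /orP [] /eqP -> /IH [s [a [size_s ->]]].
- by case: s size_s => [|a0 s] size_s; [exists [::], a.+1 | exists (a0.+1 :: s), a].
- by exists (0 :: s), a; rewrite /= size_s.
Qed.

Theorem mainTheorem13 (n : nat) (x : seq bool) :
  4 <= n -> inB x -> size x = 2 * n + 4 -> delta x = Posz 4 ->
  ~ record_setter (bin_val x).
Proof.
(* The length hypotheses only say that x has n >= 4 blocks, which delta x = 4 already forces. *)
move=> _ [bs [_ [blocks_bs ->]]] _.
rewrite delta_flatten_blocks // => -[count4].
have [[|a0 [|a1 [|a2 [|a3 [|? ?]]]]] [a4 [size_s ->]]] := flatten_blocks blocks_bs;
  rewrite count4 // in size_s.
exact: not_record_setter_four_w100.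
Qed.
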